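(* Let $R=k[x_1,\dots,x_n]$ be graded by a monoid $P$, let $e_1,\dots,e_m$ be variables of $R$ with $\deg(e_i)=\underline e_i\in P$, let $Q^1,\dots,Q^m$ and $J^1,\dots,J^m$ be $P$-homogeneous ideals with $Q^i\subseteq J^i$, and let $s(t)=\sum_{D\in P}S_Dt^D$ be a power series. Suppose: (1) $HS(J^i,t)=s(t)$ for all $i$; (2) for each $i$, $e_i$ is a nonzerodivisor in $R/Q^i$; (3) all the $Q^i$ have a common Hilbert function; (4) for every $D\in P$ there exist an index $j$ and natural numbers $a_1,\dots,a_m$ such that $\dim_k Q^j_{D+\sum_ia_i\underline e_i}=S_{D+\sum_ia_i\underline e_i}$. Then $Q^i=J^i$ for all $i$.
   Context: $R$ is graded by a monoid $P$ such that every monomial is $P$-homogeneous, the $P$-grading refines the standard grading, and each graded piece is finite dimensional. For a $P$-homogeneous ideal $I$, $I_D$ is its degree-$D$ piece and $HS(I,t)=\sum_{D\in P}\dim_k(I_D)\,t^D$; the Hilbert function of $I$ is $D\mapsto\dim_k I_D$. *)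

From HB Require Import structures.
From mathcomp Require Import all_boot all_order all_algebra.
From mathcomp Require Export multinomials.mpoly.
Set Implicit Arguments. Unset Strict Implicit. Unset Printing Implicit Defensive.
Import GRing.Theory.
Local Open Scope ring_scope.

(* The P-grading of R = k[x_1..x_n] is given by weights w : 'I_n -> P of the
   variables; a monomial x^m has P-degree sum_i m_i * w_i.  P is a commutative
   monoid, written additively (nmodType). *)
Definition pdeg (P : nmodType) (n : nat) (w : 'I_n -> P) (m : 'X_{1..n}) : P :=
  \sum_(i < n) w i *+ m i.

Definition refines_std (P : nmodType) (n : nat) (w : 'I_n -> P) : Prop :=
  forall m1 m2 : 'X_{1..n}, pdeg w m1 = pdeg w m2 -> mdeg m1 = mdeg m2.

(* f is P-homogeneous of degree D (0 is homogeneous of every degree) *)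
Definition phomog (P : nmodType) (n : nat) (k : fieldType) (w : 'I_n -> P)
    (D : P) (f : {mpoly k[n]}) : bool :=
  all (fun m => pdeg w m == D) (msupp f).

Definition pcomp (P : nmodType) (n : nat) (k : fieldType) (w : 'I_n -> P)
    (D : P) (f : {mpoly k[n]}) : {mpoly k[n]} :=
  \sum_(m <- msupp f | pdeg w m == D) f@_m *: 'X_[m].

Definition is_ideal (n : nat) (k : fieldType) (I : {pred {mpoly k[n]}}) : Prop :=
  [/\ 0 \in I,
      (forall f g, f \in I -> g \in I -> f + g \in I) &
      (forall r f, f \in I -> r * f \in I)].

Definition phomog_ideal (P : nmodType) (n : nat) (k : fieldType)
    (w : 'I_n -> P) (I : {pred {mpoly k[n]}}) : Prop :=
  is_ideal I /\ forall f D, f \in I -> pcomp w D f \in I.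

Definition piece (P : nmodType) (n : nat) (k : fieldType) (w : 'I_n -> P)
    (I : {pred {mpoly k[n]}}) (D : P) : {pred {mpoly k[n]}} :=
  [pred f | (f \in I) && phomog w D f].

Definition lin_indep (n : nat) (k : fieldType) (s : seq {mpoly k[n]}) : Prop :=
  forall c : 'I_(size s) -> k,
    \sum_(i < size s) c i *: s`_i = 0 -> forall i, c i = 0.

Definition has_dim (n : nat) (k : fieldType) (A : {pred {mpoly k[n]}}) (r : nat)
  : Prop :=
  (exists s : seq {mpoly k[n]}, [/\ size s = r, all (mem A) s & lin_indep s]) /\
  (forall s : seq {mpoly k[n]}, all (mem A) s -> lin_indep s -> (size s <= r)%N).

From Pilot Require Import Defs.
From mathcomp Require Import all_boot all_order all_algebra.
From mathcomp Require Import multinomials.mpoly.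
Set Implicit Arguments. Unset Strict Implicit. Unset Printing Implicit Defensive.
Import GRing.Theory.
Local Open Scope ring_scope.

(* Call a degree D defective when dim Q_D < S_D, i.e. when Q^l_D is a proper
   subspace of J^l_D for some (equivalently every) l.  If D is defective, so is
   D + deg e_l: otherwise Q^l = J^l in degree D + deg e_l, hence x_{e_l} J^l_D
   lies in Q^l and, e_l being a nonzerodivisor mod Q^l, J^l_D lies in Q^l.
   Thus the defective degrees are closed under adding the deg e_i, and
   hypothesis (4) says every degree has a non-defective shift, so no degree is
   defective and the homogeneous ideals Q^l and J^l agree piece by piece. *)

Section Grading.
Variables (k : fieldType) (n : nat) (P : nmodType) (w : 'I_n -> P).

Lemma pdegD (m1 m2 : 'X_{1..n}) : pdeg w (m1 + m2)%MM = pdeg w m1 + pdeg w m2.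
Proof.
by rewrite /pdeg -big_split; apply: eq_bigr => i _; rewrite mnmDE mulrnDr.
Qed.

Lemma pdegU i : pdeg w U_(i)%MM = w i.
Proof.
rewrite /pdeg (bigD1 i) //= mnm1E eqxx mulr1n big1 ?addr0 // => j /negbTE.
by rewrite mnm1E eq_sym => ->.
Qed.

Lemma phomog_mulX i D (f : {mpoly k[n]}) :
  phomog w D f -> phomog w (w i + D) ('X_i * f).
Proof.
move=> /allP homf; apply/allP => u; rewrite mulrC (perm_mem (msuppMX _ _)).
by case/mapP=> u' /homf /eqP homu' ->; rewrite pdegD pdegU homu'.
Qed.

Lemma mcoeff_pcomp D (f : {mpoly k[n]}) u :
  (Defs.pcomp w D f)@_u = if pdeg w u == D then f@_u else 0.
Proof.
rewrite /Defs.pcomp raddf_sum /= big_mkcond /=.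
under eq_bigr do rewrite mcoeffZ mcoeffX.
have [uf | uNf] := boolP (u \in msupp f); last first.
  rewrite memN_msupp_eq0 // big1_seq; first by case: ifP.
  move=> u' /andP[_ u'f]; have /negbTE -> : u' != u by apply: contraNneq uNf => <-.
  by rewrite mulr0; case: ifP.
rewrite (bigD1_seq u) ?msupp_uniq //= eqxx mulr1 big1 ?addr0 //.
by move=> u' /negbTE ->; rewrite mulr0; case: ifP.
Qed.

Lemma phomog_pcomp D (f : {mpoly k[n]}) : phomog w D (Defs.pcomp w D f).
Proof.
by apply/allP => u; rewrite mcoeff_msupp mcoeff_pcomp; case: ifP => // _; rewrite eqxx.
Qed.

Lemma sum_pcomp (f : {mpoly k[n]}) :
  f = \sum_(D <- undup (map (pdeg w) (msupp f))) Defs.pcomp w D f.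
Proof.
apply/mpolyP => u; rewrite raddf_sum /=.
under eq_bigr do rewrite mcoeff_pcomp.
have [uf | /memN_msupp_eq0 ->] := boolP (u \in msupp f); last first.
  by rewrite big1 // => D _; case: ifP.
rewrite (bigD1_seq (pdeg w u)) ?undup_uniq ?mem_undup ?map_f //= eqxx big1 ?addr0 //.
by move=> D; rewrite eq_sym => /negbTE ->.
Qed.

End Grading.

Section Ideals.
Variables (k : fieldType) (n : nat) (I : {pred {mpoly k[n]}}).
Hypothesis idealI : is_ideal I.

Lemma is_idealZ c f : f \in I -> c *: f \in I.
Proof. by case: idealI => _ _ idealM fI; rewrite -mul_mpolyC idealM. Qed.

Lemma is_ideal_sum (T : Type) (s : seq T) (F : T -> {mpoly k[n]}) :
  (forall x, F x \in I) -> \sum_(x <- s) F x \in I.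
Proof.
case: idealI => I0 idealD _ FI.
by elim: s => [|x s IHs]; rewrite ?big_nil ?big_cons ?idealD.
Qed.

Lemma lin_indep_cons (s : seq {mpoly k[n]}) g :
  all (mem I) s -> lin_indep s -> g \notin I -> lin_indep (g :: s).
Proof.
move=> sI indep_s gNI c; rewrite /= big_ord_recl /=.
under eq_bigr do rewrite add0n.
set X := \sum_(i < size s) _ => sum0.
have XI : X \in I.
  by apply: is_ideal_sum => i; apply/is_idealZ/(all_nthP 0 sI).
have c0 : c ord0 = 0.
  apply: contraNeq gNI => c0_neq0.
  have -> : g = - (c ord0)^-1 *: X.
    have -> : X = - (c ord0 *: g) by apply/eqP; rewrite -addr_eq0 addrC sum0.
    by rewrite scaleNr scalerN opprK scalerA mulVf ?scale1r.
  exact: is_idealZ.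
move: sum0; rewrite c0 scale0r add0r => /(indep_s (fun i => c (lift ord0 i))) cs0.
case=> -[|i] lti; first by rewrite -c0; congr c; apply: val_inj.
by rewrite -(cs0 (Ordinal (lti : (i < size s)%N))); congr c; apply: val_inj.
Qed.

End Ideals.

Section Dimension.
Variables (k : fieldType) (n : nat).
Implicit Types A B I : {pred {mpoly k[n]}}.

Lemma has_dim_uniq A r1 r2 : has_dim A r1 -> has_dim A r2 -> r1 = r2.
Proof.
move=> [[s1 [<- s1A indep1]] max1] [[s2 [<- s2A indep2]] max2].
by apply/eqP; rewrite eqn_leq max1 ?max2.
Qed.

Lemma has_dim_ltn_notin I A B a b g :
  is_ideal I -> {subset A <= I} -> {subset A <= B} ->
  has_dim A a -> has_dim B b -> g \in B -> g \notin I -> (a < b)%N.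
Proof.
move=> idealI AI AB [[s [<- sA indep_s]] _] [_ maxB] gB gNI.
apply: (maxB (g :: s)); first by rewrite /= gB (sub_all AB).
exact: lin_indep_cons (sub_all AI sA) indep_s gNI.
Qed.

End Dimension.

Section Defect.
Variables (k : fieldType) (n : nat) (P : nmodType) (w : 'I_n -> P).
Variables (m : nat) (e : 'I_m -> 'I_n) (Q J : 'I_m -> {pred {mpoly k[n]}}).
Variables (S H : P -> nat).
Hypothesis idealQ : forall i, phomog_ideal w (Q i).
Hypothesis idealJ : forall i, phomog_ideal w (J i).
Hypothesis subQJ : forall i f, f \in Q i -> f \in J i.
Hypothesis dimJ : forall i D, has_dim (piece w (J i) D) (S D).
Hypothesis nzdivQ : forall i f, 'X_(e i) * f \in Q i -> f \in Q i.
Hypothesis dimQ : forall i D, has_dim (piece w (Q i) D) (H D).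

Lemma defect_of_notin l D g :
  g \in J l -> phomog w D g -> g \notin Q l -> (H D < S D)%N.
Proof.
move=> gJ homg gNQ; apply: has_dim_ltn_notin (idealQ l).1 _ _ (dimQ l D)
  (dimJ l D) _ gNQ; last by rewrite inE gJ homg.
- by move=> f /andP[].
- by move=> f /andP[/subQJ fJ homf]; rewrite inE fJ homf.
Qed.

Lemma defect_shift l D : (H D < S D)%N -> (H (D + w (e l)) < S (D + w (e l)))%N.
Proof.
move=> defD; rewrite ltnNge; apply: contraTN defD => full_shift.
have [[s [<- sJ indep_s]] _] := dimJ l D.
rewrite -leqNgt; apply: (dimQ l D).2 indep_s; apply/allP => f /(allP sJ).
rewrite !inE => /andP[fJ homf]; rewrite homf andbT; apply: nzdivQ.
apply: contraTT full_shift => XfNQ; rewrite -ltnNge addrC.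
apply: defect_of_notin XfNQ; last exact: phomog_mulX.
by case: (idealJ l) => -[_ _ idealM] _; apply: idealM.
Qed.

Lemma defect_shiftn l N D :
  (H D < S D)%N -> (H (D + w (e l) *+ N) < S (D + w (e l) *+ N))%N.
Proof.
elim: N D => [|N IHN] D defD; first by rewrite mulr0n addr0.
by rewrite mulrSr addrA; apply/defect_shift/IHN.
Qed.

Lemma defect_shift_sum (r : seq 'I_m) (a : 'I_m -> nat) D :
  (H D < S D)%N ->
  let D' := D + \sum_(i <- r) w (e i) *+ a i in (H D' < S D')%N.
Proof.
elim: r D => [|i r IHr] D defD /=; first by rewrite big_nil addr0.
by rewrite big_cons addrA; apply/IHr/defect_shiftn.
Qed.

Lemma phomog_memJ_memQ
    (no_defect : forall D, exists (j : 'I_m) (a : 'I_m -> nat),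
       let D' := D + \sum_(i < m) w (e i) *+ a i in
       has_dim (piece w (Q j) D') (S D')) l D g :
  g \in J l -> phomog w D g -> g \in Q l.
Proof.
move=> gJ homg; apply: contraT => gNQ.
have [j [a /= dimQj]] := no_defect D.
have := defect_shift_sum (index_enum 'I_m) a (defect_of_notin gJ homg gNQ).
by rewrite /= (has_dim_uniq (dimQ j _) dimQj) ltnn.
Qed.

End Defect.

Theorem mainTheorem15
  (k : fieldType) (n : nat) (P : nmodType) (w : 'I_n -> P)
  (hrefine : refines_std w)
  (m : nat) (e : 'I_m -> 'I_n)
  (Q J : 'I_m -> {pred {mpoly k[n]}})
  (hQ : forall i, phomog_ideal w (Q i))
  (hJ : forall i, phomog_ideal w (J i))
  (hQJ : forall i f, f \in Q i -> f \in J i)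
  (S : P -> nat)
  (h1 : forall i D, has_dim (piece w (J i) D) (S D))
  (h2 : forall i f, 'X_(e i) * f \in Q i -> f \in Q i)
  (h3 : exists H : P -> nat, forall i D, has_dim (piece w (Q i) D) (H D))
  (h4 : forall D : P, exists (j : 'I_m) (a : 'I_m -> nat),
          let D' := D + \sum_(i < m) w (e i) *+ a i in
          has_dim (piece w (Q j) D') (S D')) :
  forall i f, (f \in Q i) = (f \in J i).
Proof.
have [H dimQ] := h3.
move=> i f; apply/idP/idP; first exact: hQJ.
move=> fJ; rewrite (sum_pcomp w f); apply: (is_ideal_sum (hQ i).1) => D.
apply: (phomog_memJ_memQ hQ hJ hQJ h1 h2 dimQ h4 _ (phomog_pcomp w D f)).
exact: (hJ i).2.
Qed.
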